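(* Let $(d_n)_{n\ge1}$ be a sequence of prime numbers. Then \[ \lambda(\{\mathsf a'_n=d_n\text{ for infinitely many }n\})=\begin{cases}1&\text{if }\sum_{n\ge1}\frac{1}{d_n^2}=\infty,\\ 0&\text{otherwise.}\end{cases} \]
   Context: $I=(0,1]$, $\lambda$ is Lebesgue measure on $I$, and $\mathsf a_n(x)$ denotes the $n$-th continued fraction digit of $x\in I$. $\mathbb P$ is the set of primes. The prime digits are $\mathsf a'_n(x):=\mathsf a_n(x)$ if $\mathsf a_n(x)\in\mathbb P$ and $\mathsf a'_n(x):=0$ otherwise. *)

From HB Require Import structures.
From mathcomp Require Import all_boot all_order all_algebra.
From mathcomp Require Import all_classical all_reals all_analysis.
Set Implicit Arguments. Unset Strict Implicit. Unset Printing Implicit Defensive.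
Import Order.TTheory GRing.Theory Num.Theory.
Local Open Scope ring_scope.

(* Gauss map on I = (0,1]: T x = 1/x - floor(1/x)  (with 1/0 = 0, so T 0 = 0). *)
Definition gauss (R : realType) (x : R) : R := x^-1 - (Num.floor (x^-1))%:~R.

(* n-th continued fraction digit (n >= 1): a_n(x) = floor(1 / T^(n-1) x).
   For rational x the expansion terminates and later digits are 0. *)
Definition cf_digit (R : realType) (n : nat) (x : R) : nat :=
  Num.trunc ((iter n.-1 (@gauss R) x)^-1).

Definition prime_digit (R : realType) (n : nat) (x : R) : nat :=
  if prime (cf_digit n x) then cf_digit n x else 0%N.

From HB Require Import structures.
From mathcomp Require Import all_boot all_order all_algebra.
From mathcomp Require Import all_classical all_reals all_analysis.
From mathcomp Require Import zify ring lra.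
Set Implicit Arguments. Unset Strict Implicit. Unset Printing Implicit Defensive.
Import Order.TTheory GRing.Theory Num.Theory.
Local Open Scope classical_set_scope.
Local Open Scope ring_scope.

(* The cylinder of the x in (0,1] whose first digits are c is, up to its endpoints, the
   interval between cfrac c 0 and cfrac c 1, and appending a digit k multiplies its length
   by a factor between 1/(4k^2) and 2/k^2. Summing over cylinders, for any event E that
   depends only on the first M digits, the part of E where a_(M+1) = k has measure between
   1/(4k^2) and 2/k^2 times that of E. When sum 1/d_n^2 converges, the first Borel-Cantelli
   lemma applies. When it diverges, removing the events a_n = d_n one at a time shows that
   {a_n <> d_n for N < n <= M} has measure at most 1/(1 + sum_(N<n<=M) 1/(4 d_n^2)), which
   tends to 0, so almost every x has a_n = d_n infinitely often. For prime d_n, a'_n = d_n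
   exactly when a_n = d_n. *)

Section ContinuedFractions.
Variable R : realType.
Implicit Types (x y z : R) (c : seq nat).

Lemma cf_digit1 x : cf_digit 1 x = Num.truncn x^-1.
Proof. by []. Qed.

Lemma cf_digitS i x : cf_digit i.+2 x = cf_digit i.+1 (gauss x).
Proof. by rewrite /cf_digit /= -iterSr. Qed.

Lemma gauss_decomp x : 0 < x ->
  x^-1 = (cf_digit 1 x)%:R + gauss x /\ 0 <= gauss x < 1.
Proof.
move=> x0; have xi0 : 0 <= x^-1 by rewrite invr_ge0 ltW.
have gaussE : gauss x = x^-1 - (cf_digit 1 x)%:R.
  suff fl : Num.floor x^-1 = (cf_digit 1 x)%:Z by rewrite /gauss fl.
  by rewrite cf_digit1 truncn_floor xi0 gez0_abs // floor_ge0.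
have /andP[lo hi] := truncn_itv xi0; rewrite -cf_digit1 in lo hi.
split; first by rewrite gaussE addrC subrK.
by rewrite gaussE subr_ge0 lo ltrBlDl -natr1 addrC in hi *.
Qed.

Definition cfrac c y : R := foldr (fun (j : nat) z => (j%:R + z)^-1) y c.

Definition pos_digits c := all (fun j => 0 < j)%N c.

Lemma cfrac_rcons c k y : cfrac (rcons c k) y = cfrac c ((k%:R + y)^-1).
Proof. by rewrite /cfrac foldr_rcons. Qed.

Lemma pos_digits_rcons c k : pos_digits (rcons c k) = pos_digits c && (0 < k)%N.
Proof. by rewrite /pos_digits all_rcons andbC. Qed.

Lemma invr_natD_itv (j : nat) z : (0 < j)%N -> 0 <= z -> 0 < (j%:R + z)^-1 <= 1.
Proof.
move=> j0 z0; have j1 : 1 <= j%:R :> R by rewrite ler1n.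
by rewrite invr_gt0 invf_le1; lra.
Qed.

Lemma cfrac_itv c y : pos_digits c -> 0 <= y <= 1 -> 0 <= cfrac c y <= 1.
Proof.
move=> + y01; elim: c => [//|j c IH] /= /andP[j0 /IH/andP[z0 _]].
by have /andP[/ltW -> ->] := invr_natD_itv j0 z0.
Qed.

Lemma cfracK c y : pos_digits c -> 0 < y < 1 ->
  [/\ 0 < cfrac c y < 1, iter (size c) (@gauss R) (cfrac c y) = y &
      forall i, (i < size c)%N -> cf_digit i.+1 (cfrac c y) = nth 0%N c i].
Proof.
move=> + y01; elim: c => [_|j c IH /= /andP[j0 /IH]]; first by split.
move: (cfrac c y) => z [/andP[z0 z1] itz dz].
have j1 : 1 <= j%:R :> R by rewrite ler1n.
have x0 : 0 < (j%:R + z)^-1 by rewrite invr_gt0; lra.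
have d1 : cf_digit 1 (j%:R + z)^-1 = j.
  by rewrite cf_digit1 invrK; apply: truncn_def; rewrite -natr1; lra.
have gx : gauss (j%:R + z)^-1 = z.
  have [+ _] := gauss_decomp x0; rewrite d1 invrK => /addrI; exact: esym.
split.
- by rewrite x0 invf_lt1 //; lra.
- by rewrite -iterS iterSr gx.
- by case=> [_|i]; [rewrite d1 | rewrite ltnS cf_digitS gx => /dz].
Qed.

Lemma cfrac_iter_gauss c x : pos_digits c -> 0 < x <= 1 ->
  (forall i, (i < size c)%N -> cf_digit i.+1 x = nth 0%N c i) ->
  let y := iter (size c) (@gauss R) x in
  x = cfrac c y /\ 0 <= y <= 1.
Proof.
elim: c x => [|j c IH] x /=; first by move=> _ /andP[/ltW -> ->].
move=> /andP[j0 pc] /andP[x0 x1] dx.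
have [ex /andP[g0 g1]] := gauss_decomp x0.
have xE : x = (j%:R + gauss x)^-1 by rewrite -[j](dx 0%N) // -ex invrK.
rewrite -iterS iterSr.
case: c IH pc dx => [|j' c] IH pc dx; first by rewrite /= g0 ltW.
have gpos : 0 < gauss x.
  rewrite lt_neqAle g0 andbT; apply: contraTneq pc => g0E.
  have := dx 1%N isT; rewrite cf_digitS cf_digit1 -g0E invr0 truncn0 /=.
  by move=> <-.
have dg i : (i < size (j' :: c))%N -> cf_digit i.+1 (gauss x) = nth 0%N (j' :: c) i.
  by move=> hi; rewrite -cf_digitS; apply: (dx i.+1).
have [gE y01] := IH (gauss x) pc (ltac:(by rewrite gpos ltW)) dg.
by split => //; rewrite {1}xE {1}gE.
Qed.

(* (p, p', q, q') encodes the Moebius map y |-> (p + p' y) / (q + q' y). *)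
Fixpoint cf_mobius c : nat * nat * nat * nat :=
  if c is j :: c' then
    let: (p, p', q, q') := cf_mobius c' in (q, q', (j * q + p)%N, (j * q' + p')%N)
  else (0%N, 1%N, 1%N, 0%N).

Lemma cf_mobius_inv c : pos_digits c -> let: (p, p', q, q') := cf_mobius c in
  [/\ (q' <= q)%N, (q' + p' <= q + p)%N, (1 <= q)%N &
      ((p * q' + 1 = p' * q) \/ (p' * q + 1 = p * q'))%N].
Proof.
elim: c => [|j c IH] /=; first by split => //; left.
by move=> /andP[j0 /IH]; case: (cf_mobius c) => [[[p p'] q] q'] [*]; split; nia.
Qed.

Lemma cfrac_mobius c y : pos_digits c -> 0 <= y ->
  let: (p, p', q, q') := cf_mobius c in
  cfrac c y = (p%:R + p'%:R * y) / (q%:R + q'%:R * y).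
Proof.
move=> + y0; elim: c => [|j c IH] /=.
  by move=> _; rewrite mul1r add0r mul0r addr0 divr1.
move=> /andP[j0 pc]; have := IH pc; have := cf_mobius_inv pc.
case: (cf_mobius c) => [[[p p'] q] q'] [_ _ q1 _] ->.
have q1R : 1 <= q%:R :> R by rewrite ler1n.
have j1 : 1 <= j%:R :> R by rewrite ler1n.
have q'y := mulr_ge0 (ler0n R q') y0.
have D0 : q%:R + q'%:R * y != 0 by rewrite lt0r_neq0 //; lra.
rewrite !natrD !natrM -[X in (X + _)^-1](mulfK D0) -mulrDl invf_div; congr (_ / _).
ring.
Qed.

(* a, b are the denominators q, q' of cf_mobius c, and s is its determinant. *)
Lemma cfrac_subr c : pos_digits c -> exists s a b : R,
  [/\ s = 1 \/ s = -1, 1 <= a, 0 <= b <= a &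
   forall u v, 0 <= u -> 0 <= v ->
     cfrac c u - cfrac c v = s * (u - v) / ((a + b * u) * (a + b * v))].
Proof.
move=> pc; have := cf_mobius_inv pc; have := cfrac_mobius (c := c) pc.
case: (cf_mobius c) => [[[p p'] q] q'] cE [qq' _ q1 det].
have [s [s1 sE]] : exists s : R, (s = 1 \/ s = -1) /\ p'%:R * q%:R - p%:R * q'%:R = s.
  case: det => det; [exists 1 | exists (-1)]; split; try by [left|right].
    by rewrite -!natrM -det natrD; ring.
  by rewrite -!natrM -det natrD; ring.
exists s, q%:R, q'%:R; split; rewrite ?ler0n ?ler_nat ?ler1n //.
move=> u v u0 v0; rewrite (cE _ u0) (cE _ v0) -sE.
have q1R : 1 <= q%:R :> R by rewrite ler1n.
have := mulr_ge0 (ler0n R q') u0; have := mulr_ge0 (ler0n R q') v0 => qv qu.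
by field; apply/andP; split; apply: lt0r_neq0; lra.
Qed.

End ContinuedFractions.

Section Cylinders.
Variable R : realType.
Implicit Types (x y : R) (c : seq nat).

Lemma cfrac_onto c x : pos_digits c ->
  (cfrac c 0 < x < cfrac c 1) \/ (cfrac c 1 < x < cfrac c 0) ->
  exists2 y, 0 < y < 1 & cfrac c y = x.
Proof.
elim: c x => [|j c IH] x /=; first by move=> _ [h|/andP[h1 h2]]; [exists x | lra].
move=> /andP[j0 pc] hx.
have /andP[a00 _] := cfrac_itv (y := 0 : R) pc (ltac:(by rewrite lexx ler01)).
have /andP[a10 _] := cfrac_itv (y := 1 : R) pc (ltac:(by rewrite lexx ler01)).
have j1 : 1 <= j%:R :> R by rewrite ler1n.
set a0 := cfrac c 0 in a00 hx *; set a1 := cfrac c 1 in a10 hx *.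
have P0 : j%:R + a0 \is Num.pos by rewrite posrE; lra.
have P1 : j%:R + a1 \is Num.pos by rewrite posrE; lra.
have Px : x \is Num.pos.
  by rewrite posrE; case: hx => /andP[+ _]; apply: lt_trans; rewrite invr_gt0; lra.
have Pxi : x^-1 \is Num.pos by rewrite posrE invr_gt0 -posrE.
have gtV a : j%:R + a \is Num.pos -> ((j%:R + a)^-1 < x) = (x^-1 < j%:R + a).
  by move=> Pa; rewrite -(ltf_pV2 Pa Pxi) invrK.
have ltV a : j%:R + a \is Num.pos -> (x < (j%:R + a)^-1) = (j%:R + a < x^-1).
  by move=> Pa; rewrite -(ltf_pV2 Pxi Pa) invrK.
have hz : (a0 < x^-1 - j%:R < a1) \/ (a1 < x^-1 - j%:R < a0).
  case: hx => /andP[]; rewrite ?(gtV _ P0) ?(gtV _ P1) ?(ltV _ P0) ?(ltV _ P1) => h1 h2;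
    [right|left]; apply/andP; split; lra.
have [y y01 ey] := IH _ pc hz.
by exists y => //; rewrite ey addrC subrK invrK.
Qed.

Lemma cfrac_between c y : pos_digits c -> 0 <= y <= 1 ->
  (cfrac c 0 <= cfrac c y <= cfrac c 1) \/ (cfrac c 1 <= cfrac c y <= cfrac c 0).
Proof.
move=> pc /andP[y0 y1]; have [s [a [b [s1 a1 /andP[b0 ba] sub]]]] := cfrac_subr R pc.
have e1 := sub y 0 y0 (lexx 0); have e2 := sub 1 y ler01 y0.
have D1 : 0 < (a + b * y) * (a + b * 0) by apply: mulr_gt0; nra.
have D2 : 0 < (a + b * 1) * (a + b * y) by apply: mulr_gt0; nra.
have q1 : 0 <= (y - 0) / ((a + b * y) * (a + b * 0)) by apply: divr_ge0; lra.
have q2 : 0 <= (1 - y) / ((a + b * 1) * (a + b * y)) by apply: divr_ge0; lra.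
rewrite -mulrA in e1 e2.
by case: s1 => sE in e1 e2; [left|right]; rewrite sE in e1 e2; apply/andP; split; nra.
Qed.

Definition cylinder_length c : R := `|cfrac c 1 - cfrac c 0|.

Definition cylinder c : set R :=
  [set x | 0 < x <= 1 /\ forall i, (i < size c)%N -> cf_digit i.+1 x = nth 0%N c i].

Lemma cylinder_between_ends c a b : pos_digits c -> a <= b ->
  (a = cfrac c 0 /\ b = cfrac c 1) \/ (a = cfrac c 1 /\ b = cfrac c 0) ->
  [set` `]a, b[] `<=` cylinder c /\ cylinder c `<=` [set` `[a, b]].
Proof.
move=> pc ab ends; split.
- move=> x; rewrite /= in_itv /= => hx.
  have [y y01 <-] : exists2 y, 0 < y < 1 & cfrac c y = x.
    by apply: cfrac_onto => //; case: ends => -[<- <-]; [left|right].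
  have [/andP[g0 g1] _ dg] := cfracK pc y01.
  by split => //; rewrite g0 ltW.
- move=> x [x01 dx]; rewrite /= in_itv /=.
  have [xE y01] := cfrac_iter_gauss pc x01 dx; rewrite xE.
  by case: ends ab (cfrac_between pc y01) => -[-> ->] ab [] /andP[h1 h2];
    apply/andP; split; lra.
Qed.

Lemma cylinder_sandwich c : pos_digits c -> exists a b : R,
  [/\ a <= b, b - a = cylinder_length c,
      [set` `]a, b[] `<=` cylinder c & cylinder c `<=` [set` `[a, b]]].
Proof.
rewrite /cylinder_length => pc; have [h|h] := lerP (cfrac c 0) (cfrac c 1).
  exists (cfrac c 0), (cfrac c 1).
  have [] := cylinder_between_ends pc h (or_introl (conj erefl erefl)).
  by split => //; rewrite ger0_norm ?subr_ge0.
exists (cfrac c 1), (cfrac c 0).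
have [] := cylinder_between_ends pc (ltW h) (or_intror (conj erefl erefl)).
by split; rewrite ?ltW // distrC ger0_norm ?subr_ge0 ?ltW.
Qed.

Lemma lebesgue_countable_diff (A B : set R) : measurable B -> B `<=` A ->
  countable (A `\` B) -> measurable A /\ lebesgue_measure A = lebesgue_measure B.
Proof.
move=> Bm BA ABc.
have ABm : measurable (A `\` B).
  by apply: countable_measurable => // t; exact: measurable_set1.
rewrite -(setDUK BA); split; first exact: measurableU.
rewrite measureU //; last by rewrite setDIK.
change (lebesgue_measure B + lebesgue_measure (A `\` B) = lebesgue_measure B)%E.
by rewrite (countable_lebesgue_measure0 ABc) adde0.
Qed.

Lemma cylinder_lebesgue c : pos_digits c ->
  measurable (cylinder c) /\ lebesgue_measure (cylinder c) = (cylinder_length c)%:E.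
Proof.
move=> pc; have [a [b [ab <- inner outer]]] := cylinder_sandwich pc.
have endpoints : cylinder c `\` [set` `]a, b[] `<=` [set a] `|` [set b].
  move=> x [/outer]; rewrite /= !in_itv /= => /andP[h1 h2] h3.
  case: (ltgtP a x) h1 => // ax _; last by left.
  case: (ltgtP x b) h2 => // xb _; last by right.
  by exfalso; apply: h3; rewrite ax xb.
have ends_c : countable (cylinder c `\` [set` `]a, b[]).
  apply: sub_countable (subset_card_le endpoints) _.
  by apply: finite_set_countable; rewrite finite_setU; split; exact: finite_set1.
have [cm ->] := lebesgue_countable_diff (measurable_itv _) inner ends_c; split => //.
rewrite lebesgue_measure_itv /= lte_fin.
by case: (ltgtP a b) ab => [ab _|//|-> _]; rewrite ?subrr // -EFinD.
Qed.

(* (k + 1)^-1 and k^-1 are the remainders at the ends of the subcylinder of digit k. *)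
Lemma digit_gap_bounds (a b k : R) : 1 <= a -> 0 <= b <= a -> 1 <= k ->
  let u := (k + 1)^-1 in let v := k^-1 in
  let X := (a + b * u) * (a + b * v) in let Y := (a + b * 1) * (a + b * 0) in
  (v - u) / X <= 2 * (k ^+ 2)^-1 * (1 / Y) /\ (4 * k ^+ 2)^-1 * (1 / Y) <= (v - u) / X.
Proof.
move=> a1 /andP[b0 ba] k1 u v X Y.
have k0 : 0 < k by lra.
have u0 : 0 < u by rewrite invr_gt0; lra.
have v0 : 0 < v by rewrite invr_gt0.
have uk : u * (k + 1) = 1 by rewrite mulVf //; lra.
have vk : v * k = 1 by rewrite mulVf //; lra.
have vu : v - u = u * v by rewrite /u /v; field; rewrite !lt0r_neq0 //; lra.
have kv : (k ^+ 2)^-1 = v ^+ 2 by rewrite exprVn.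
have v20 : 0 <= v ^+ 2 by rewrite exprn_ge0 // ltW.
have bu0 : 0 <= b * u by rewrite mulr_ge0 // ltW.
have bv0 : 0 <= b * v by rewrite mulr_ge0 // ltW.
have bu1 : b * u <= b by rewrite ler_piMr //; nra.
have bv1 : b * v <= b by rewrite ler_piMr //; nra.
have X0 : a ^+ 2 <= X by rewrite /X expr2; nra.
have X1 : X <= (a + b) ^+ 2 by rewrite /X expr2; nra.
have Ye : Y = a * (a + b) by rewrite /Y; ring.
have Y0 : 0 < Y by rewrite Ye; nra.
have Xp : 0 < X by nra.
split.
- rewrite ler_pdivrMr // kv mul1r mulrAC ler_pdivlMr // vu.
  have hY : Y <= 2 * a ^+ 2 by rewrite Ye expr2; nra.
  have t1 : u * v * Y <= v ^+ 2 * Y by apply: ler_wpM2r; [lra | rewrite expr2; nra].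
  have t2 : v ^+ 2 * Y <= v ^+ 2 * (2 * a ^+ 2) by exact: ler_wpM2l.
  have := ler_wpM2l v20 X0; lra.
- rewrite ler_pdivlMr //.
  have -> : (4 * k ^+ 2)^-1 * (1 / Y) * X = (v ^+ 2 * X) / (4 * Y).
    by rewrite /v; field; rewrite !lt0r_neq0.
  rewrite ler_pdivrMr; last lra.
  have hY : X <= 2 * Y by rewrite Ye; move: X1; rewrite expr2; nra.
  have t1 : v ^+ 2 * X <= v ^+ 2 * (2 * Y) by exact: ler_wpM2l.
  have t2 : v ^+ 2 <= v * (2 * u) by rewrite expr2; apply: ler_wpM2l; nra.
  have t3 : v ^+ 2 * (2 * Y) <= v * (2 * u) * (2 * Y) by apply: ler_wpM2r; lra.
  rewrite vu; lra.
Qed.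

Lemma cylinder_length_rcons c k : pos_digits c -> (0 < k)%N ->
  cylinder_length (rcons c k) <= 2 * (k%:R ^+ 2)^-1 * cylinder_length c /\
  (4 * k%:R ^+ 2)^-1 * cylinder_length c <= cylinder_length (rcons c k).
Proof.
move=> pc k0; rewrite /cylinder_length !cfrac_rcons addr0.
have [s [a [b [s1 a1 b0a sub]]]] := cfrac_subr R pc.
have k1 : 1 <= k%:R :> R by rewrite ler1n.
have := digit_gap_bounds a1 b0a k1 => /=.
have u0 : 0 <= (k%:R + 1)^-1 :> R by rewrite invr_ge0; lra.
have v0 : 0 <= k%:R^-1 :> R by rewrite invr_ge0; lra.
rewrite (sub _ _ u0 v0) (sub _ _ ler01 (lexx 0)).
have sn : `|s| = 1 by case: s1 => ->; rewrite ?normrN normr1.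
have uv : (k%:R + 1)^-1 <= k%:R^-1 :> R by rewrite lef_pV2 ?posrE; lra.
have /andP[b0 _] := b0a.
have Xp : 0 < (a + b * (k%:R + 1)^-1) * (a + b * k%:R^-1).
  by apply: mulr_gt0; have := mulr_ge0 b0 u0; have := mulr_ge0 b0 v0; lra.
have Yp : 0 < (a + b * 1) * (a + b * 0) by apply: mulr_gt0; lra.
rewrite -!mulrA !normrM sn !mul1r (distrC (_ + 1)^-1) subr0 normr1 mul1r.
by rewrite [`|k%:R^-1 - _|]ger0_norm ?subr_ge0 // !gtr0_norm ?invr_gt0.
Qed.

End Cylinders.

Section PrefixSets.
Variable R : realType.
Implicit Types (x : R) (c : seq nat) (P : seq nat -> Prop).

Definition cf_prefix M x : seq nat := [seq cf_digit i.+1 x | i <- iota 0 M].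

Lemma size_cf_prefix M x : size (cf_prefix M x) = M.
Proof. by rewrite size_map size_iota. Qed.

Lemma nth_cf_prefix M x i : (i < M)%N -> nth 0%N (cf_prefix M x) i = cf_digit i.+1 x.
Proof. by move=> iM; rewrite (nth_map 0%N) ?size_iota // nth_iota. Qed.

Lemma cf_prefixS M x : cf_prefix M.+1 x = rcons (cf_prefix M x) (cf_digit M.+1 x).
Proof. by rewrite /cf_prefix -{1}addn1 iotaD map_cat add0n cats1. Qed.

Lemma cylinderE c x : cylinder c x <-> 0 < x <= 1 /\ cf_prefix (size c) x = c.
Proof.
split=> -[x01 dx]; split => //; last by move=> i ic; rewrite -dx nth_cf_prefix.
apply: (@eq_from_nth _ 0%N); rewrite size_cf_prefix // => i ic.
by rewrite nth_cf_prefix // dx.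
Qed.

Definition rcons_opt c (e : option nat) := if e is Some k then rcons c k else c.

Definition pos_opt (e : option nat) := if e is Some k then (0 < k)%N else true.

Lemma pos_digits_rcons_opt c e : pos_opt e -> pos_digits c -> pos_digits (rcons_opt c e).
Proof. by case: e => [k|] //= k0 pc; rewrite pos_digits_rcons pc k0. Qed.

Lemma cylinder_rcons_opt c e x : cylinder (rcons_opt c e) x <->
  [/\ 0 < x <= 1, cf_prefix (size c) x = c &
      if e is Some k then cf_digit (size c).+1 x = k else True].
Proof.
case: e => [k|] /=; rewrite cylinderE; last by split=> [[]|[]].
rewrite size_rcons cf_prefixS; split=> [[x01 /eqP]|[x01 -> ->]] //.
by rewrite eqseq_rcons => /andP[/eqP -> /eqP ->].
Qed.

(* Digits vanish only after a terminating expansion, so such x form a countable set. *)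
Lemma cfrac_of_zero_digit M x : 0 < x <= 1 -> ~~ pos_digits (cf_prefix M x) ->
  exists c, x = cfrac c 0.
Proof.
move=> x01; set s := cf_prefix M x => /allPn[j js]; rewrite lt0n negbK => /eqP j0.
have hs : has (pred1 0%N) s by apply/hasP; exists j => //; rewrite j0.
set m := find (pred1 0%N) s.
have mM : (m < M)%N by rewrite -(size_cf_prefix M x) -has_find.
have sz : size (take m s) = m by rewrite size_take -has_find hs.
have pc : pos_digits (take m s).
  apply/(all_nthP 0%N) => i; rewrite sz => im.
  by rewrite nth_take // lt0n; have /negbT := before_find 0%N im.
have dc i : (i < size (take m s))%N -> cf_digit i.+1 x = nth 0%N (take m s) i.
  by rewrite sz => im; rewrite nth_take // nth_cf_prefix // (ltn_trans im mM).
have [xE /andP[y0 y1]] := cfrac_iter_gauss pc x01 dc; rewrite sz in xE y0 y1.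
exists (take m s); rewrite {1}xE; congr cfrac.
have zm : cf_digit m.+1 x = 0%N.
  by rewrite -(nth_cf_prefix x mM); exact/eqP/(nth_find 0%N hs).
apply/eqP; rewrite eq_le y0 andbT leNgt; apply/negP => ypos.
have : (1 <= (iter m (@gauss R) x)^-1) by rewrite invf_ge1.
by rewrite -truncn_gt0; move: zm; rewrite /cf_digit /= => ->.
Qed.

Definition prefix_set P M (e : option nat) : set R :=
  [set x | [/\ 0 < x <= 1, P (cf_prefix M x) &
             if e is Some k then cf_digit M.+1 x = k else True]].

(* Indexed by nat through pickle_inv, so that countable additivity applies. *)
Definition prefix_cylinder P M (e : option nat) (i : nat) : set R :=
  if pickle_inv i : option (seq nat) is Some c then
    if (size c == M) && pos_digits c && `[< P c >] then cylinder (rcons_opt c e) else set0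
  else set0.

Lemma measurable_prefix_cylinder P M e i : pos_opt e -> measurable (prefix_cylinder P M e i).
Proof.
rewrite /prefix_cylinder => e0; case: pickle_inv => [c|]; last exact: measurable0.
case: ifP => [/andP[/andP[_ pc] _]|_]; last exact: measurable0.
exact: (cylinder_lebesgue R (pos_digits_rcons_opt e0 pc)).1.
Qed.

Lemma prefix_cylinder_pickle P M e i x : prefix_cylinder P M e i x ->
  pickle_inv i = Some (cf_prefix M x) /\ prefix_set P M e x.
Proof.
rewrite /prefix_cylinder; case: pickle_inv => [c|] //.
case: ifP => // /andP[/andP[/eqP <- _] /asboolP Pc] /cylinder_rcons_opt[x01 dx ex].
by rewrite dx; split => //; split; rewrite ?dx.
Qed.

Lemma prefix_set_lebesgue P M e : pos_opt e ->
  measurable (prefix_set P M e) /\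
  (lebesgue_measure (prefix_set P M e) =
    \sum_(0 <= i <oo) lebesgue_measure (prefix_cylinder P M e i))%E.
Proof.
move=> e0; set U := \bigcup_i prefix_cylinder P M e i.
have Um : measurable U.
  by apply: bigcupT_measurable => i; exact: measurable_prefix_cylinder.
have UP : U `<=` prefix_set P M e by move=> x [i _ /prefix_cylinder_pickle[]].
have Uc : countable (prefix_set P M e `\` U).
  apply: sub_countable (subset_card_le (B := [set cfrac c 0 | c in [set: seq nat]]) _) _.
    move=> x [[x01 Px ex] notU].
    have [pd|] := boolP (pos_digits (cf_prefix M x)); last first.
      by case/(cfrac_of_zero_digit x01) => c ->; exists c.
    exfalso; apply: notU; exists (pickle (cf_prefix M x)) => //.
    rewrite /prefix_cylinder pickleK_inv size_cf_prefix eqxx pd asboolT //.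
    by apply/cylinder_rcons_opt; rewrite size_cf_prefix.
  exact: sub_countable (card_image_le _ _) (countableP _).
have [Pm ->] := lebesgue_countable_diff Um UP Uc; split => //.
apply: measure_semi_bigcup => [i||//]; first exact: measurable_prefix_cylinder.
move=> i j _ _ [x [/prefix_cylinder_pickle[ix _] /prefix_cylinder_pickle[jx _]]].
by rewrite -(pickle_invK (T := seq nat) i) -(pickle_invK (T := seq nat) j) ix jx.
Qed.

Lemma measurable_prefix_set P M e : pos_opt e -> measurable (prefix_set P M e).
Proof. by move=> e0; have [] := prefix_set_lebesgue P M e0. Qed.

Lemma prefix_cylinder_next P M k i : (0 < k)%N ->
  (lebesgue_measure (prefix_cylinder P M (Some k) i) <=
     (2 * (k%:R ^+ 2)^-1)%:E * lebesgue_measure (prefix_cylinder P M None i))%E /\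
  (((4 * k%:R ^+ 2)^-1)%:E * lebesgue_measure (prefix_cylinder P M None i) <=
     lebesgue_measure (prefix_cylinder P M (Some k) i))%E.
Proof.
move=> k0; rewrite /prefix_cylinder.
case: pickle_inv => [c|]; last by rewrite measure0 !mule0.
case: ifP => [/andP[/andP[_ pc] _]|_]; last by rewrite measure0 !mule0.
have pck : pos_digits (rcons_opt c (Some k)) by rewrite /= pos_digits_rcons pc.
rewrite (cylinder_lebesgue R pc).2 (cylinder_lebesgue R pck).2 -!EFinM !lee_fin.
exact: cylinder_length_rcons.
Qed.

Lemma prefix_set_next_le P M k : (0 < k)%N ->
  (lebesgue_measure (prefix_set P M (Some k)) <=
     (2 * (k%:R ^+ 2)^-1)%:E * lebesgue_measure (prefix_set P M None))%E.
Proof.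
move=> k0; rewrite (prefix_set_lebesgue P M (e := Some k) k0).2.
rewrite (prefix_set_lebesgue P M (e := None) isT).2.
rewrite -nneseriesZl ?lee_fin ?mulr_ge0 ?invr_ge0 ?exprn_ge0 //.
apply: lee_nneseries => [i _ _|i _]; first exact: measure_ge0.
exact: (prefix_cylinder_next P M i k0).1.
Qed.

Lemma prefix_set_next_ge P M k : (0 < k)%N ->
  (((4 * k%:R ^+ 2)^-1)%:E * lebesgue_measure (prefix_set P M None) <=
     lebesgue_measure (prefix_set P M (Some k)))%E.
Proof.
move=> k0; rewrite (prefix_set_lebesgue P M (e := Some k) k0).2.
rewrite (prefix_set_lebesgue P M (e := None) isT).2.
rewrite -nneseriesZl ?lee_fin ?invr_ge0 ?mulr_ge0 ?exprn_ge0 //.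
apply: lee_nneseries => [i _ _|i _]; last exact: (prefix_cylinder_next P M i k0).2.
by rewrite mule_ge0 ?lee_fin ?invr_ge0 ?mulr_ge0 ?exprn_ge0.
Qed.

Lemma prefix_setT M : prefix_set (fun _ => True) M None = [set` `]0, 1]].
Proof. by apply/seteqP; split => x /=; rewrite in_itv /=; [case | split]. Qed.

Lemma lebesgue_itv01 : lebesgue_measure [set` `]0, 1%R]] = 1%E :> \bar R.
Proof. by rewrite lebesgue_measure_itv /= lte_fin ltr01 -EFinD subr0. Qed.

Lemma prefix_set_le1 P M e : pos_opt e -> (lebesgue_measure (prefix_set P M e) <= 1)%E.
Proof.
move=> e0; rewrite -lebesgue_itv01 -(prefix_setT M).
apply: le_measure; rewrite ?inE; first exact: measurable_prefix_set.
  exact: measurable_prefix_set.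
by move=> x [].
Qed.

End PrefixSets.

Lemma nneseries_pinfty_tail (R : realType) (g : nat -> R) N (A : R) : (forall n, 0 <= g n) ->
  (\sum_(1 <= n <oo) (g n)%:E = +oo)%E ->
  exists2 M, (N <= M)%N & A <= \sum_(N.+1 <= n < M.+1) g n.
Proof.
move=> g0 sum_oo; pose u m := (\sum_(1 <= n < m) (g n)%:E)%E.
have : u @ \oo --> +oo%E.
  rewrite -sum_oo; apply: ereal_nondecreasing_is_cvgn.
  by apply: lee_sum_nneg_natr => n _ _; rewrite lee_fin.
case/cvgeyPge/(_ (A + \sum_(1 <= n < N.+1) g n)) => m0 _ um0.
exists (maxn N m0); first exact: leq_maxl.
have := um0 (maxn N m0).+1 (leqW (leq_maxr N m0)).
rewrite /u sumEFin lee_fin [X in _ <= X](big_cat_nat _ (n := N.+1)) //= ?ltnS ?leq_maxl //.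
by lra.
Qed.

Section DigitHits.
Variable R : realType.
Variable d : nat -> nat.
Hypothesis d_gt0 : forall n, (0 < d n.+1)%N.

Definition digit_hits (n : nat) : set R :=
  if n is m.+1 then prefix_set (fun _ => True) m (Some (d n)) else set0.

Lemma measurable_digit_hits n : measurable (digit_hits n).
Proof.
case: n => [|m]; first exact: measurable0.
by apply: measurable_prefix_set; exact: d_gt0.
Qed.

Lemma lebesgue_digit_hits_le n :
  (lebesgue_measure (digit_hits n) <= (2 * ((d n)%:R ^+ 2)^-1)%:E)%E.
Proof.
case: n => [|m] /=; first by rewrite measure0 lee_fin mulr_ge0 ?invr_ge0 ?exprn_ge0.
apply: le_trans (prefix_set_next_le R (fun _ => True) m (d_gt0 m)) _.
by rewrite prefix_setT lebesgue_itv01 mule1.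
Qed.

Lemma lebesgue_lim_sup_digit_hits_cvg :
  (\sum_(1 <= n <oo) (((d n)%:R ^+ 2)^-1 : R)%:E != +oo)%E ->
  lebesgue_measure (lim_sup_set digit_hits) = 0%E.
Proof.
move=> fin; apply: lim_sup_set_cvg0; first exact: measurable_digit_hits.
set f := fun n => (((d n)%:R ^+ 2)^-1 : R)%:E.
have f0 n : (0 <= f n)%E by rewrite lee_fin invr_ge0 exprn_ge0.
apply: (@le_lt_trans _ _ (\sum_(0 <= n <oo) (2%:E * f n))%E).
  apply: lee_nneseries => [n _ _|n _]; first exact: measure_ge0.
  by rewrite -EFinM; exact: lebesgue_digit_hits_le.
rewrite nneseriesZl // (nneseries_recl (P := xpredT)) // lte_mul_pinfty //.
by rewrite lte_add_pinfty ?ltry // ltey.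
Qed.

Definition misses_from N (s : seq nat) : Prop :=
  forall i, (N <= i)%N -> (i < size s)%N -> nth 0%N s i <> d i.+1.

Lemma prefix_set_misses_fromS N M : (N <= M)%N ->
  prefix_set (misses_from N) M.+1 None =
    prefix_set (misses_from N) M None `\` prefix_set (misses_from N) M (Some (d M.+1))
  :> set R.
Proof.
move=> NM; apply/seteqP; split => x /=.
  move=> [x01 miss _]; split.
    split => // i Ni; rewrite size_cf_prefix => iM.
    have := miss i Ni; rewrite cf_prefixS nth_rcons size_cf_prefix iM.
    by rewrite size_rcons size_cf_prefix; apply; exact: ltnW.
  move=> [_ _]; have := miss M NM.
  rewrite cf_prefixS nth_rcons size_cf_prefix ltnn eqxx size_rcons size_cf_prefix.
  by apply.
move=> [[x01 miss _] notk]; split => // i Ni.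
rewrite cf_prefixS size_rcons size_cf_prefix ltnS leq_eqVlt => /predU1P[->|iM].
  by rewrite nth_rcons size_cf_prefix ltnn eqxx => e; apply: notk.
by rewrite nth_rcons size_cf_prefix iM; apply: miss; rewrite ?size_cf_prefix.
Qed.

(* If mu(B) <= 1/(1 + s) and a proportion at least c of B is removed, the rest has
   measure at most (1 - c)/(1 + s) <= 1/(1 + s + c). *)
Lemma le_inv_addr (b bk s c : R) : 0 <= s -> 0 <= c <= 1 -> 0 <= b ->
  b <= (1 + s)^-1 -> c * b <= bk -> b - bk <= (1 + s + c)^-1.
Proof.
move=> s0 /andP[c0 c1] b0 bs cb.
have t1 : (1 + s)^-1 * (1 + s) = 1 by rewrite mulVf //; lra.
have t0 : 0 < (1 + s)^-1 by rewrite invr_gt0; lra.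
have t1le : (1 + s)^-1 <= 1 by rewrite invf_le1; lra.
apply: (@le_trans _ _ ((1 - c) * (1 + s)^-1)); first nra.
rewrite -[(1 + s + c)^-1]div1r ler_pdivlMr; nra.
Qed.

Definition hit_weight (n : nat) : R := (4 * (d n)%:R ^+ 2)^-1.

Lemma hit_weight_ge0 n : 0 <= hit_weight n.
Proof. by rewrite invr_ge0 mulr_ge0 ?exprn_ge0. Qed.

Lemma hit_weight_le1 n : hit_weight n.+1 <= 1.
Proof.
have dn : 1 <= (d n.+1)%:R ^+ 2 :> R by rewrite exprn_ege1 // ler1n.
by rewrite invf_le1; lra.
Qed.

Lemma lebesgue_prefix_set_misses_from N M : (N <= M)%N ->
  (lebesgue_measure (prefix_set (misses_from N) M None : set R) <=
    ((1 + \sum_(N.+1 <= n < M.+1) hit_weight n)^-1)%:E)%E.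
Proof.
elim: M => [|M IH].
  by rewrite leqn0 => /eqP ->; rewrite big_geq // addr0 invr1 prefix_set_le1.
rewrite leq_eqVlt => /predU1P[->|NM].
  by rewrite big_geq // addr0 invr1 prefix_set_le1.
rewrite ltnS in NM; have {}IH := IH NM; rewrite prefix_set_misses_fromS //.
set B := prefix_set _ M None in IH *; set Bk := prefix_set _ M (Some _).
have Bm : measurable B by exact: measurable_prefix_set.
have Bkm : measurable Bk by apply: measurable_prefix_set; exact: d_gt0.
have Bfin : (lebesgue_measure B < +oo)%E.
  by apply: le_lt_trans (prefix_set_le1 R _ _ (e := None) isT) _; rewrite ltry.
rewrite measureD // (setIidr (_ : Bk `<=` B)); last by move=> x [].
rewrite big_nat_recr //=.
have ratio := prefix_set_next_ge R (misses_from N) M (d_gt0 M).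
have B0 : (0 <= lebesgue_measure B)%E by exact: measure_ge0.
have Bk0 : (0 <= lebesgue_measure Bk)%E by exact: measure_ge0.
have Bk1 : (lebesgue_measure Bk <= 1)%E by apply: prefix_set_le1; exact: d_gt0.
move: IH ratio B0 Bk0 Bk1.
case: (lebesgue_measure B) => [b| |] //; case: (lebesgue_measure Bk) => [bk| |] //.
rewrite !lee_fin => IH ratio b0 bk0 _; rewrite addrA; apply: le_inv_addr => //.
  by apply: sumr_ge0 => n _; exact: hit_weight_ge0.
by rewrite hit_weight_ge0 hit_weight_le1.
Qed.

Lemma lebesgue_bigcap_misses_from N :
  (\sum_(1 <= n <oo) (((d n)%:R ^+ 2)^-1 : R)%:E == +oo)%E ->
  lebesgue_measure (\bigcap_M prefix_set (misses_from N) M None : set R) = 0%E.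
Proof.
move=> /eqP sum_oo; apply/eqP; rewrite eq_le measure_ge0 andbT.
apply/lee_addgt0Pr => e e0; rewrite add0e.
have w_oo : (\sum_(1 <= n <oo) (hit_weight n)%:E = +oo)%E.
  rewrite /hit_weight; under eq_eseriesr do rewrite invfM EFinM.
  by rewrite nneseriesZl ?sum_oo ?gt0_muley ?lte_fin ?invr_gt0 // => n _.
have [M NM big] := nneseries_pinfty_tail N e^-1 hit_weight_ge0 w_oo.
have misses_m M' : measurable (prefix_set (misses_from N) M' None : set R).
  exact: measurable_prefix_set.
apply: (@le_trans _ _ (lebesgue_measure (prefix_set (misses_from N) M None : set R))).
  apply: le_measure; rewrite ?inE; [exact: bigcapT_measurable | exact: misses_m |].
  by move=> x; apply.
apply: le_trans (lebesgue_prefix_set_misses_from NM) _.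
have S0 : 0 <= \sum_(N.+1 <= n < M.+1) hit_weight n.
  by apply: sumr_ge0 => n _; exact: hit_weight_ge0.
rewrite lee_fin -[e]invrK lef_pV2 ?posrE ?invr_gt0 //; lra.
Qed.

Lemma lebesgue_lim_sup_digit_hits_dvg :
  (\sum_(1 <= n <oo) (((d n)%:R ^+ 2)^-1 : R)%:E == +oo)%E ->
  lebesgue_measure (lim_sup_set digit_hits) = 1%E.
Proof.
move=> sum_oo; set S := lim_sup_set _; set U : set R := [set` `]0, 1]].
have Sm : measurable S.
  apply: bigcapT_measurable => N; apply: bigcup_measurable => n _.
  exact: measurable_digit_hits.
have SU : S `<=` U.
  by move=> x /(_ 0%N I)[[|m] _ //= [x01 _ _]]; rewrite /U /= in_itv.
set V := \bigcup_N \bigcap_M (prefix_set (misses_from N) M None : set R).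
have misses_m N M : measurable (prefix_set (misses_from N) M None : set R).
  exact: measurable_prefix_set.
have Vm : measurable V.
  by apply: bigcupT_measurable => N; apply: bigcapT_measurable => M; exact: misses_m.
have V0 : lebesgue_measure V = 0%E.
  apply/eqP; rewrite eq_le measure_ge0 andbT.
  apply: le_trans (@measure_sigma_subadditive _ _ _ lebesgue_measure V
    (fun N => \bigcap_M prefix_set (misses_from N) M None) _ Vm _) _ => //.
    by move=> N; apply: bigcapT_measurable => M; exact: misses_m.
  by rewrite eseries0 // => N _ _; exact: lebesgue_bigcap_misses_from.
have USV : U `\` S `<=` V.
  move=> x [x01 notS]; have [N notN] : exists N, ~ (\bigcup_(n >= N) digit_hits n) x.
    by apply/existsNP => hits; apply: notS => N _; exact: hits.
  exists N => // M _; split => // i Ni; rewrite size_cf_prefix => iM.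
  by rewrite nth_cf_prefix // => hit; apply: notN; exists i.+1; [exact: leqW | split].
have USm : measurable (U `\` S) by apply: measurableD => //; exact: measurable_itv.
have US0 : lebesgue_measure (U `\` S) = 0%E.
  by apply/eqP; rewrite eq_le measure_ge0 andbT -V0 le_measure ?inE.
rewrite -lebesgue_itv01 -/U -(setDUK SU) measureU //; last by rewrite setDIK.
change (lebesgue_measure S = lebesgue_measure S + lebesgue_measure (U `\` S))%E.
by rewrite US0 adde0.
Qed.

Theorem lebesgue_lim_sup_digit_hits :
  lebesgue_measure (lim_sup_set digit_hits) =
  (if \sum_(1 <= n <oo) (((d n)%:R ^+ 2)^-1 : R)%:E == +oo then 1 else 0)%E.
Proof.
case: ifP => [|/negbT]; first exact: lebesgue_lim_sup_digit_hits_dvg.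
exact: lebesgue_lim_sup_digit_hits_cvg.
Qed.

End DigitHits.

Lemma prime_digitE (R : realType) n (x : R) p : prime p ->
  (prime_digit n x = p) <-> (cf_digit n x = p).
Proof.
move=> pp; rewrite /prime_digit; case: ifP => [_|np]; first exact: iff_refl.
by split=> [p0|dp]; [rewrite -p0 in pp | rewrite dp pp in np].
Qed.

Lemma prime_digit_lim_supE (R : realType) (d : nat -> nat) :
  (forall n, (1 <= n)%N -> prime (d n)) ->
  [set x : R | 0 < x <= 1 /\
     forall N, exists n, (N <= n)%N /\ (1 <= n)%N /\ prime_digit n x = d n] =
  lim_sup_set (digit_hits (R:=R) d).
Proof.
move=> hd; apply/seteqP; split => x /=.
  move=> [x01 hits] N _; have [[|m] [Nn [n1 hit]]] := hits N => //.
  by exists m.+1 => //; split => //; apply/prime_digitE => //; exact: hd.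
move=> hits; have [[|m] _ //= [x01 _ _]] := hits 0%N I.
split => // N; have [[|m'] Nm //= [_ _ hit]] := hits N I.
by exists m'.+1; do 2!split => //; apply/prime_digitE => //; exact: hd.
Qed.

Theorem theorem2p1 (R : realType) (d : nat -> nat)
    (hd : forall n : nat, (1 <= n)%N -> prime (d n)) :
  (lebesgue_measure : set R -> \bar R)
    [set x : R | 0 < x <= 1 /\
       forall N : nat, exists n : nat, (N <= n)%N /\ (1 <= n)%N /\
         prime_digit n x = d n]
  = (if (\sum_(1 <= n <oo) (((d n)%:R ^+ 2)^-1 : R)%:E == +oo)%E
     then 1%E else 0%E).
Proof.
rewrite (prime_digit_lim_supE R hd).
by apply: lebesgue_lim_sup_digit_hits => n; apply/prime_gt0/hd.
Qed.
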